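(* Let $A\in\mathbb{M}_m(\mathbb{M}_n)$ be positive semidefinite. Then \[ (\mathrm{tr} A)^{mn}+\big(\det(\mathrm{tr}_1 A)\big)^m\ge \det A+\big(\det(\mathrm{tr}_2 A)\big)^n, \] and \[ (\mathrm{tr} A)^{mn}+\big(\det(\mathrm{tr}_2 A)\big)^n\ge \det A+\big(\det(\mathrm{tr}_1 A)\big)^m. \]
   Context: $\mathbb{M}_m(\mathbb{M}_n)$ denotes the set of $mn\times mn$ complex matrices partitioned as $A=[A_{i,j}]_{i,j=1}^m$ with each block $A_{i,j}$ an $n\times n$ complex matrix. The partial traces are $\mathrm{tr}_1 A=\sum_{i=1}^m A_{i,i}\in\mathbb{M}_n$ and $\mathrm{tr}_2 A=[\mathrm{tr}\,A_{i,j}]_{i,j=1}^m\in\mathbb{M}_m$. *)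

(* Complex numbers: an arbitrary numClosedFieldType C
   (e.g. the complex numbers; algC is an instance). *)
From HB Require Import structures.
From mathcomp Require Import all_boot all_order all_algebra.
Set Implicit Arguments. Unset Strict Implicit. Unset Printing Implicit Defensive.
Import Order.TTheory GRing.Theory Num.Theory.
Local Open Scope ring_scope.

Definition adjmx (C : numClosedFieldType) (p q : nat) (A : 'M[C]_(p, q)) : 'M[C]_(q, p) :=
  \matrix_(i, j) (A j i)^*.

Definition psdmx (C : numClosedFieldType) (p : nat) (A : 'M[C]_p) : Prop :=
  adjmx A = A /\ forall x : 'cV[C]_p, 0 <= (adjmx x *m A *m x) ord0 ord0.

(* An element of M_m(M_n) is an (m*n)x(m*n) matrix; block (i,j) has entry
   (k,l) equal to A (mxvec_index i k) (mxvec_index j l), i.e. row i*n+k, column j*n+l. *)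
Definition blk (C : numClosedFieldType) (m n : nat) (A : 'M[C]_(m * n))
  (i j : 'I_m) : 'M[C]_n :=
  \matrix_(k, l) A (mxvec_index i k) (mxvec_index j l).

Definition ptrace1 (C : numClosedFieldType) (m n : nat) (A : 'M[C]_(m * n)) : 'M[C]_n :=
  \sum_(i < m) blk A i i.

Definition ptrace2 (C : numClosedFieldType) (m n : nat) (A : 'M[C]_(m * n)) : 'M[C]_m :=
  \matrix_(i, j) \tr (blk A i j).

(* Hadamard's inequality [det P <= prod_i P_ii] for positive semidefinite P,
   proved by induction through the Schur complement of the first diagonal
   entry, combines with AM-GM on the diagonal into [det P <= (tr P / p)^p].
   Both partial traces of A are sums of principal submatrices of A, hence
   positive semidefinite, and they have the same trace t as A.  Therefore
   [det A <= (t/mn)^(mn)] and [det (tr_2 A)^n <= (t/m)^(mn)]; for [m >= 2]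
   both coefficients are at most 1/2, so the sum is at most [t^(mn)], while
   for [m = 1] the matrix [tr_1 A] is A itself.  The second inequality is the
   same argument with the roles of m and n exchanged. *)

From HB Require Import structures.
From mathcomp Require Import all_boot all_order all_algebra.
From mathcomp Require Import fingroup perm ring.
Import Order.TTheory GRing.Theory Num.Theory.
Local Open Scope ring_scope.
Set Implicit Arguments. Unset Strict Implicit.

Section Adjoint.
Variable C : numClosedFieldType.

Lemma adjmxE p q (A : 'M[C]_(p, q)) : adjmx A = (map_mx Num.conj A)^T.
Proof. by apply/matrixP=> i j; rewrite !mxE. Qed.

Lemma adjmxK p q (A : 'M[C]_(p, q)) : adjmx (adjmx A) = A.
Proof. by apply/matrixP=> i j; rewrite !mxE conjCK. Qed.

Lemma adjmxM p q r (A : 'M[C]_(p, q)) (B : 'M[C]_(q, r)) :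
  adjmx (A *m B) = adjmx B *m adjmx A.
Proof. by rewrite !adjmxE map_mxM trmx_mul. Qed.

Lemma adjmxD p q (A B : 'M[C]_(p, q)) : adjmx (A + B) = adjmx A + adjmx B.
Proof. by apply/matrixP=> i j; rewrite !mxE rmorphD. Qed.

Lemma adjmxZ p q a (A : 'M[C]_(p, q)) : adjmx (a *: A) = a^* *: adjmx A.
Proof. by apply/matrixP=> i j; rewrite !mxE rmorphM. Qed.

Lemma adjmx1 p : adjmx (1%:M : 'M[C]_p) = 1%:M.
Proof. by apply/matrixP=> i j; rewrite !mxE rmorph_nat eq_sym. Qed.

Lemma adjmx_block p1 p2 q1 q2 (Aul : 'M[C]_(p1, q1)) (Aur : 'M[C]_(p1, q2))
    (Adl : 'M[C]_(p2, q1)) (Adr : 'M[C]_(p2, q2)) :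
  adjmx (block_mx Aul Aur Adl Adr) =
  block_mx (adjmx Aul) (adjmx Adl) (adjmx Aur) (adjmx Adr).
Proof. by rewrite !adjmxE map_block_mx tr_block_mx. Qed.

Lemma adjmx_delta p q (i : 'I_p) (j : 'I_q) :
  adjmx (delta_mx i j : 'M[C]_(p, q)) = delta_mx j i.
Proof. by apply/matrixP=> k l; rewrite !mxE rmorph_nat andbC. Qed.

Lemma adjmx_colsub1 p q (f : 'I_q -> 'I_p) :
  adjmx (colsub f 1%:M : 'M[C]_(p, q)) = rowsub f 1%:M.
Proof. by apply/matrixP=> i j; rewrite !mxE rmorph_nat eq_sym. Qed.

End Adjoint.

Section PositiveSemidefinite.
Variable C : numClosedFieldType.

Lemma psdmx_congr p q (X : 'M[C]_(p, q)) (A : 'M[C]_p) :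
  psdmx A -> psdmx (adjmx X *m A *m X).
Proof.
case=> A_herm A_form; split; first by rewrite !adjmxM adjmxK A_herm mulmxA.
by move=> x; have := A_form (X *m x); rewrite adjmxM !mulmxA.
Qed.

Lemma psdmx0 p : psdmx (0 : 'M[C]_p).
Proof.
split=> [|x]; last by rewrite mulmx0 mul0mx mxE.
by apply/matrixP=> i j; rewrite !mxE conjC0.
Qed.

Lemma psdmxD p (A B : 'M[C]_p) : psdmx A -> psdmx B -> psdmx (A + B).
Proof.
case=> A_herm A_form [B_herm B_form]; split; first by rewrite adjmxD A_herm B_herm.
by move=> x; rewrite mulmxDr mulmxDl mxE addr_ge0.
Qed.

Lemma psdmx_sum p (I : finType) (F : I -> 'M[C]_p) :
  (forall i, psdmx (F i)) -> psdmx (\sum_i F i).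
Proof. by move=> psdF; elim/big_ind: _ => //; [exact: psdmx0 | exact: psdmxD]. Qed.

Lemma mxsub_congr p q (f : 'I_q -> 'I_p) (A : 'M[C]_p) :
  mxsub f f A = adjmx (colsub f 1%:M) *m A *m colsub f 1%:M.
Proof. by rewrite adjmx_colsub1 -rowsubE -mxsub_mul mulmx1. Qed.

Lemma psdmx_mxsub p q (f : 'I_q -> 'I_p) (A : 'M[C]_p) :
  psdmx A -> psdmx (mxsub f f A).
Proof. by rewrite mxsub_congr; apply: psdmx_congr. Qed.

Lemma psdmx_drsubmx p1 p2 (A : 'M[C]_(p1 + p2)) : psdmx A -> psdmx (drsubmx A).
Proof.
move=> /(psdmx_mxsub (@rshift p1 p2)); congr psdmx.
by apply/matrixP=> i j; rewrite !mxE.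
Qed.

Lemma qform_delta p (P : 'M[C]_p) (i j : 'I_p) :
  adjmx (delta_mx i 0 : 'cV[C]_p) *m P *m delta_mx j 0 = (P i j)%:M.
Proof.
apply/matrixP=> a b; rewrite !ord1 adjmx_delta -rowE -colE !mxE.
by rewrite eqxx mulr1n.
Qed.

Lemma psdmx_diag_ge0 p (P : 'M[C]_p) i : psdmx P -> 0 <= P i i.
Proof. by case=> _ /(_ (delta_mx i 0)); rewrite qform_delta mxE eqxx mulr1n. Qed.

Lemma psdmx_conjC p (P : 'M[C]_p) i j : psdmx P -> (P i j)^* = P j i.
Proof. by case=> /matrixP /(_ j i); rewrite mxE. Qed.

Lemma psdmx_diag0_eq0 p (P : 'M[C]_p) i j : psdmx P -> P i i = 0 -> P i j = 0.
Proof.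
move=> psdP Pii0; apply/eqP/negPn/negP => b_neq0; set b := P i j in b_neq0.
set d := P j j; have d_ge0 : 0 <= d := psdmx_diag_ge0 j psdP.
have bb_gt0 : 0 < b * b^* by rewrite -normCK exprn_gt0 // normr_gt0.
set k := (d + 1) / (b * b^*).
have k_real : k^* = k by apply/geC0_conj/divr_ge0; [rewrite addr_ge0 | exact: ltW].
(* With [x = e_j - k b e_i] the quadratic form equals [d - 2 (d + 1) < 0]. *)
have [_ /(_ ((- k * b) *: delta_mx i 0 + delta_mx j 0))] := psdP.
rewrite adjmxD adjmxZ !mulmxDl !mulmxDr -!scalemxAl -!scalemxAr !qform_delta.
rewrite !mxE !eqxx !mulr1n Pii0 -(psdmx_conjC i j psdP) -/b -/d.
rewrite rmorphM rmorphN /= k_real.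
have -> : - k * b^* * (- k * b * 0) + - k * b^* * b + (- k * b * b^* + d)
    = - (d + 2%:R) + 2%:R * (d + 1 - k * (b * b^*)) by ring.
by rewrite divfK ?gt_eqF // subrr mulr0 addr0 oppr_ge0 lt_geF // ltr_wpDl.
Qed.

End PositiveSemidefinite.

Section Hadamard.
Variable C : numClosedFieldType.

Definition schur_compl n (P : 'M[C]_(1 + n)) : 'M[C]_n :=
  drsubmx P - (P 0 0)^-1 *: (dlsubmx P *m ursubmx P).

Section SchurComplement.
Variables (n : nat) (P : 'M[C]_(1 + n)).
Hypotheses (psdP : psdmx P) (P00_neq0 : P 0 0 != 0).

Let a := P 0 0.
Let L : 'M[C]_(1 + n) := block_mx 1%:M 0 (- a^-1 *: dlsubmx P) 1%:M.

Lemma ulsubmx_ord0 : ulsubmx P = a%:M.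
Proof.
apply/matrixP=> i j; rewrite !ord1 !mxE eqxx mulr1n.
by congr (P _ _); apply: val_inj.
Qed.

Lemma mul_schur_elim : L *m P = block_mx a%:M (ursubmx P) 0 (schur_compl P).
Proof.
rewrite /L -[X in _ *m X]submxK mulmx_block !mul0mx !mul1mx !addr0 ulsubmx_ord0.
rewrite mul_mx_scalar -scalemxAl scalerA mulrN mulfV // scaleN1r addNr.
by rewrite /schur_compl addrC scaleNr.
Qed.

Lemma det_schur_compl : \det P = a * \det (schur_compl P).
Proof.
have := det_mulmx L P; rewrite mul_schur_elim det_ublock det_lblock !det1 mul1r.
by rewrite det_scalar expr1 mul1r => <-.
Qed.

(* The Schur complement is the lower right block of the congruence [L P L^*]. *)
Lemma psdmx_schur_compl : psdmx (schur_compl P).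
Proof.
have := psdmx_drsubmx (psdmx_congr (adjmx L) psdP).
rewrite adjmxK mul_schur_elim /L adjmx_block !adjmx1 mulmx_block block_mxKdr.
by rewrite mul0mx mulmx1 add0r.
Qed.

Lemma schur_compl_diag_le i : schur_compl P i i <= P (rshift 1 i) (rshift 1 i).
Proof.
rewrite !mxE big_ord1 gerBl mulr_ge0 ?invr_ge0 ?psdmx_diag_ge0 //.
by rewrite !mxE -(psdmx_conjC (lshift n 0) (rshift 1 i) psdP) mulrC mul_conjC_ge0.
Qed.

End SchurComplement.

Lemma det_psdmx_le_prod_diag p (P : 'M[C]_p) :
  psdmx P -> 0 <= \det P <= \prod_i P i i.
Proof.
elim: p P => [|p IHp] P psdP; first by rewrite det_mx00 big_ord0 ler01 lexx.
have P00_ge0 : 0 <= P 0 0 := psdmx_diag_ge0 0 psdP.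
rewrite big_ord_recl; have [P00_eq0|P00_neq0] := eqVneq (P 0 0) 0.
  have -> : \det P = 0.
    by rewrite (expand_det_row _ 0) big1 // => j _; rewrite psdmx_diag0_eq0 ?mul0r.
  by rewrite P00_eq0 mul0r lexx.
have psdS := psdmx_schur_compl psdP P00_neq0.
have /andP[S_ge0 S_le] := IHp _ psdS.
rewrite det_schur_compl // mulr_ge0 //=; apply: ler_wpM2l => //.
apply: le_trans S_le _; apply: ler_prod => i _.
have -> : lift 0 i = rshift 1 i :> 'I_(1 + p) by apply: val_inj.
by rewrite psdmx_diag_ge0 //= schur_compl_diag_le.
Qed.

End Hadamard.

Lemma det_mxsub_inj (R : comPzRingType) p q (f : 'I_q -> 'I_p) (A : 'M[R]_p) :
  q = p -> injective f -> \det (mxsub f f A) = \det A.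
Proof.
move=> eq_qp; case: p / eq_qp in A f * => f_inj; set s := perm f_inj.
have -> : mxsub f f A = row_perm s (col_perm s A).
  by apply/matrixP=> i j; rewrite !mxE !permE.
rewrite row_permE col_permE !det_mulmx !det_perm odd_permV mulrCA -expr2.
by rewrite sqrr_sign mulr1.
Qed.

Lemma sum_mxvec_index (V : nmodType) m n (F : 'I_(m * n) -> V) :
  \sum_p F p = \sum_i \sum_k F (mxvec_index i k).
Proof.
rewrite (reindex _ (curry_mxvec_bij _ _)) pair_bigA /=.
by apply: eq_bigr => -[i k].
Qed.

Section PartialTrace.
Variables (C : numClosedFieldType) (m n : nat) (A : 'M[C]_(m * n)).

Lemma ptrace1_mxsub : ptrace1 A = \sum_i mxsub (mxvec_index i) (mxvec_index i) A.
Proof. by apply: eq_bigr => i _; apply/matrixP=> k l; rewrite !mxE. Qed.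

Lemma ptrace2_mxsub :
  ptrace2 A = \sum_(k < n) mxsub (fun i => mxvec_index i k) (fun i => mxvec_index i k) A.
Proof.
apply/matrixP=> i j; rewrite summxE mxE /mxtrace.
by apply: eq_bigr => k _; rewrite !mxE.
Qed.

Lemma psdmx_ptrace1 : psdmx A -> psdmx (ptrace1 A).
Proof. by move=> psdA; rewrite ptrace1_mxsub; apply: psdmx_sum => i; apply: psdmx_mxsub. Qed.

Lemma psdmx_ptrace2 : psdmx A -> psdmx (ptrace2 A).
Proof. by move=> psdA; rewrite ptrace2_mxsub; apply: psdmx_sum => k; apply: psdmx_mxsub. Qed.

Lemma mxtrace_ptrace1 : \tr (ptrace1 A) = \tr A.
Proof.
rewrite ptrace1_mxsub raddf_sum [RHS]sum_mxvec_index.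
by apply: eq_bigr => i _; apply: eq_bigr => k _; rewrite mxE.
Qed.

Lemma mxtrace_ptrace2 : \tr (ptrace2 A) = \tr A.
Proof.
rewrite ptrace2_mxsub raddf_sum [RHS]sum_mxvec_index exchange_big.
by apply: eq_bigr => k _; apply: eq_bigr => i _; rewrite mxE.
Qed.

End PartialTrace.

Lemma det_ptrace1_1 (C : numClosedFieldType) n (A : 'M[C]_(1 * n)) :
  \det (ptrace1 A) = \det A.
Proof.
rewrite ptrace1_mxsub big_ord1 det_mxsub_inj ?mul1n //.
by move=> k l /cast_ord_inj/enum_rank_inj[].
Qed.

Lemma det_ptrace2_1 (C : numClosedFieldType) m (A : 'M[C]_(m * 1)) :
  \det (ptrace2 A) = \det A.
Proof.
rewrite ptrace2_mxsub big_ord1 det_mxsub_inj ?muln1 //.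
by move=> i j /cast_ord_inj/enum_rank_inj[].
Qed.

Lemma det_psdmx_le_trace (C : numClosedFieldType) p (P : 'M[C]_p) :
  psdmx P -> 0 <= \det P <= (\tr P / p%:R) ^+ p.
Proof.
move=> psdP; have /andP[det_ge0 det_le] := det_psdmx_le_prod_diag psdP.
rewrite det_ge0 (le_trans det_le) //.
have [+ _] := leif_AGM (A := 'I_p) (E := fun i => P i i)
  (fun i _ => psdmx_diag_ge0 i psdP).
by rewrite card_ord.
Qed.

Lemma det_mx_dim0 (R : comPzRingType) k (B : 'M[R]_k) : k = 0%N -> \det B = 1.
Proof. by case: k B => // B _; exact: det_mx00. Qed.

Lemma expr_invn_le_half (R : numFieldType) k e :
  (1 < k)%N -> (0 < e)%N -> (k%:R^-1 : R) ^+ e <= 2^-1.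
Proof.
move=> k_gt1 e_gt0; have k_gt0 : (0 < k)%N by apply: ltnW.
have kV_le1 : (k%:R^-1 : R) <= 1 by rewrite invf_le1 ?ltr0n // ler1n.
apply: le_trans (ler_iXnr _ _ kV_le1) _; rewrite ?invr_ge0 //.
by rewrite lef_pV2 ?posrE ?ltr0n // ler_nat.
Qed.

Lemma add_det_bounds_le (R : numFieldType) (t dA d1 d2 : R) m n N :
  N = (m * n)%N -> (1 < m)%N -> (0 < n)%N -> 0 <= t ->
  dA <= (t / N%:R) ^+ N -> 0 <= d2 -> d2 <= (t / m%:R) ^+ m -> 0 <= d1 ->
  dA + d2 ^+ n <= t ^+ N + d1 ^+ m.
Proof.
move=> -> m_gt1 n_gt0 t_ge0 dA_le d2_ge0 d2_le d1_ge0.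
have mn_gt1 : (1 < m * n)%N by rewrite (leq_trans m_gt1) ?leq_pmulr.
have d2n_le : d2 ^+ n <= t ^+ (m * n) * m%:R^-1 ^+ (m * n).
  rewrite -exprMn exprM lerXn2r ?nnegrE ?exprn_ge0 ?mulr_ge0 ?invr_ge0 //.
rewrite -[leLHS]addr0 lerD ?exprn_ge0 // (le_trans (lerD dA_le d2n_le)) //.
rewrite exprMn -mulrDr ler_piMr ?exprn_ge0 // [leRHS](splitr 1) mul1r.
by rewrite lerD ?expr_invn_le_half ?(ltnW mn_gt1).
Qed.

Unset Implicit Arguments. Set Strict Implicit.

Theorem proposition4p6 (C : numClosedFieldType) (m n : nat) (A : 'M[C]_(m * n)) :
  psdmx A ->
  \det A + (\det (ptrace2 A)) ^+ n <= (\tr A) ^+ (m * n) + (\det (ptrace1 A)) ^+ m /\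
  \det A + (\det (ptrace1 A)) ^+ m <= (\tr A) ^+ (m * n) + (\det (ptrace2 A)) ^+ n.
Proof.
move=> psdA.
have [n0|n_gt0] := posnP n.
  by subst n; rewrite (det_mx_dim0 A (muln0 m)) det_mx00 exprM !expr0 !expr1n.
have [m0|m_gt0] := posnP m.
  by subst m; rewrite (det_mx_dim0 A (mul0n n)) det_mx00 exprM !expr0 !expr1n.
have tr_ge0 : 0 <= \tr A by apply: sumr_ge0 => i _; apply: psdmx_diag_ge0.
have /andP[_ dA_le] := det_psdmx_le_trace psdA.
have /andP[d1_ge0 d1_le] := det_psdmx_le_trace (psdmx_ptrace1 psdA).
have /andP[d2_ge0 d2_le] := det_psdmx_le_trace (psdmx_ptrace2 psdA).
rewrite mxtrace_ptrace1 in d1_le; rewrite mxtrace_ptrace2 in d2_le.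
split.
  have [m1|m_neq1] := eqVneq m 1%N.
    subst m; rewrite det_ptrace1_1 expr1 addrC exprM expr1 lerD // lerXn2r //.
    by rewrite divr1 expr1 in d2_le.
  by apply: (add_det_bounds_le (erefl _)); rewrite // ltn_neqAle eq_sym m_neq1.
have [n1|n_neq1] := eqVneq n 1%N.
  subst n; rewrite det_ptrace2_1 expr1 addrC exprM expr1 lerD // lerXn2r //.
  by rewrite divr1 expr1 in d1_le.
by apply: (add_det_bounds_le (mulnC m n)); rewrite // ltn_neqAle eq_sym n_neq1.
Qed.
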